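(* Under Assumption A6, let $P^*$ be the constructed probability measure on $(X^*,Y^*(0))$. Then $P^*(X^*\le0)=P(X=0)$ and, for every $y\in\mathbb R$, $$P^*\big(Y^*(0)\le y\mid X^*\le0\big)=P\big(Y\le y\mid X=0\big);$$ that is, the distribution of $Y^*(0)$ given $X^*\le0$ under $P^*$ equals the distribution of $Y$ given $X=0$ under $P$.
   Context: Setting: a probability measure $P$ under which $X\ge0$ is a real random variable with $P(X=0)>0$ having a density $f_X$ on $(0,\infty)$, $Y(0)$ is a real random variable with $E|Y(0)|<\infty$ (the potential outcome at the bunching point $0$), and the observed outcome satisfies $Y=Y(0)$ on $\{X=0\}$. $Q_{Y(0)\mid X=x}(e):=\inf\{y:P(Y(0)\le y\mid X=x)\ge e\}$ and $F_{Y(0)}$ is the CDF of $Y(0)$. Assumption A6: there are functions $s:(0,\infty)\to\mathbb R$ and $\phi:(0,1)\to\mathbb R$ such that (i) $Q_{Y(0)\mid X=x}(e)=s(x)+\phi(e)$ for all $x>0$, $e\in(0,1)$; (ii) $s$ is real analytic on $(0,\infty)$ and extends to a real analytic function $s^*:\mathbb R\to\mathbb R$; (iii) $\phi$ is strictly increasing, and, writing $G(t):=\mathrm{Leb}\{e\in(0,1):\phi(e)\le t\}$ (the generalized inverse $\phi^{-1}$), there is a continuous $h:\mathbb R\to[0,\infty)$ with $h=f_X$ on $(0,\infty)$ such that $\int_{-\infty}^{\infty}G(y-s^*(x))\,h(x)\,dx=F_{Y(0)}(y)$ for all $y\in\mathbb R$. Construction of $P^*$: under $P^*$, $X^*$ has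 CDF $F^*(x)=\int_{-\infty}^x h(t)\,dt$ for $x<0$ and $F^*(x)=P(X\le x)$ for $x\ge0$, and the conditional distribution of $Y^*(0)$ given $X^*=x$ has quantile function $e\mapsto s^*(x)+\phi(e)$, $e\in(0,1)$ (equivalently conditional CDF $y\mapsto G(y-s^*(x))$). *)

From HB Require Import structures.
From mathcomp Require Import all_boot all_order all_algebra.
From mathcomp Require Import all_classical all_reals all_analysis.
From mathcomp Require Import measurable_realfun.
Set Implicit Arguments. Unset Strict Implicit. Unset Printing Implicit Defensive.
Import Order.TTheory GRing.Theory Num.Theory.
Import numFieldNormedType.Exports.
Local Open Scope classical_set_scope.
Local Open Scope ring_scope.

Definition real_analytic_on {R : realType} (D : set R) (f : R -> R) : Prop :=
  forall x0, D x0 -> exists r : R, 0 < r /\ exists a : nat -> R,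
    forall x, `|x - x0| < r ->
      (fun n => \sum_(0 <= k < n) a k * (x - x0) ^+ k) @ \oo --> f x.

Definition quantile {R : realType} (nu : probability R R) (e : R) : R :=
  inf [set y : R | (e%:E <= nu [set` `]-oo, y]])%E].

Definition Ginv {R : realType} (phi : R -> R) (t : R) : \bar R :=
  (@lebesgue_measure R) [set e : R | 0 < e < 1 /\ phi e <= t].

Definition cond_distribution {R : realType} d (T : measurableType d)
    (P : probability T R) (X Y : T -> R) (D : set R)
    (kappa : R -> probability R R) : Prop :=
  (forall B, measurable B -> measurable_fun [set: R] (fun x : R => kappa x B : \bar R)) /\
  forall A B, measurable A -> A `<=` D -> measurable B ->
    P (X @^-1` A `&` Y @^-1` B) = (\int[pushforward P X]_(x in A) kappa x B)%E.

Definition condP {R : realType} d (T : measurableType d)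
    (P : probability T R) (A B : set T) : R :=
  fine (P (A `&` B)) / fine (P B).

From HB Require Import structures.
From mathcomp Require Import all_boot all_order all_algebra.
From mathcomp Require Import all_classical all_reals all_analysis.
From mathcomp Require Import measurable_realfun.
From mathcomp Require Import lra.
Import Order.TTheory GRing.Theory Num.Theory.
Import numFieldNormedType.Exports.
Local Open Scope classical_set_scope.
Local Open Scope ring_scope.

(* The conditional law of Y*(0) given X* = x has CDF y |-> G(y - s*(x)) (quantile/CDF
   duality), and since s* = s on (0, oo) so does the conditional law of Y(0) given X = x > 0.
   The mixing identity A6(iii) thus reads P(Y(0) <= y) = \int k*_x(]-oo, y]) h(x) dx; letting
   y -> oo shows that h is a probability density, so \int_{x <= 0} h = P(X = 0), and the CDF of
   X* then forces the law of X* on (-oo, 0] to be h(x) dx.  Hence P*(X* <= 0, Y*(0) <= y) is the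
   integral of k*_x(]-oo, y]) h(x) over x <= 0, while P(X > 0, Y(0) <= y) is the same integral
   over x > 0; subtracting the latter from the mixing identity gives
   P(X = 0, Y(0) <= y) = P*(X* <= 0, Y*(0) <= y), and Y = Y(0) on {X = 0}. *)

Lemma fin_num_addIe {R : realType} {x u v : \bar R} :
  x \is a fin_num -> (u + x = v + x)%E -> u = v.
Proof. by move=> xf /(congr1 (fun t => t - x)%E); rewrite !addeK. Qed.

Section cdf_limits.
Context {d} {T : measurableType d} {R : realType} (P : probability T R).
Context {Z : T -> R} (mZ : measurable_fun [set: T] Z).
Local Open Scope ereal_scope.

Let mZle (y : R) : measurable (Z @^-1` `]-oo, y]).
Proof. by rewrite -[X in measurable X]setTI; exact: mZ. Qed.

Lemma cvg_prob_le_pinfty : P (Z @^-1` `]-oo, n%:R]) @[n --> \oo] --> 1.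
Proof.
rewrite -(probability_setT P).
have <- : \bigcup_n Z @^-1` `]-oo, (n%:R : R)] = setT.
  rewrite -subTset => t _ /=; exists (Num.trunc `|Z t|).+1 => //=.
  by rewrite in_itv/= (le_trans (ler_norm (Z t)))// ltW// truncnS_gt.
apply: nondecreasing_cvg_mu => //; first exact: bigcup_measurable.
by move=> m n mn; apply/subsetPset => x/=; rewrite !in_itv/= => /le_trans; apply; rewrite ler_nat.
Qed.

Lemma cvg_prob_le_ninfty : P (Z @^-1` `]-oo, (- n%:R)%R]) @[n --> \oo] --> 0.
Proof.
rewrite -(measure0 P).
have <- : \bigcap_n Z @^-1` `]-oo, (- n%:R)%R] = set0.
  rewrite -subset0 => t /(_ (Num.trunc `|Z t|).+1 I); rewrite /= in_itv/= => Zt.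
  have := truncnS_gt `|Z t|; have := ler_norm (- Z t); rewrite normrN.
  set k := (Num.trunc _).+1%:R; lra.
apply: nonincreasing_cvg_mu => //.
- by rewrite (le_lt_trans (probability_le1 _ _)) ?ltry.
- exact: bigcap_measurable.
- by move=> m n mn; apply/subsetPset => x/=; rewrite !in_itv/= => /le_trans; apply; rewrite lerN2 ler_nat.
Qed.

Lemma cvg_prob_le_right (y : R) :
  P (Z @^-1` `]-oo, (y + n.+1%:R^-1)%R]) @[n --> \oo] --> P (Z @^-1` `]-oo, y]).
Proof.
rewrite (itvNycEbigcap false) preimage_bigcap.
apply: nonincreasing_cvg_mu => //.
- by rewrite (le_lt_trans (probability_le1 _ _)) ?ltry.
- exact: bigcap_measurable.
- move=> m n mn; apply/subsetPset; apply: preimage_subset; apply: subset_itvl.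
  by rewrite bnd_simp lerD2l lef_pV2 ?posrE// ler_nat.
Qed.

End cdf_limits.

Section quantile.
Context {R : realType} (nu : probability R R).
Local Open Scope ereal_scope.

Let mid : measurable_fun [set: R] id := @measurable_id _ _ _.

Let cdf_le {x y : R} : (x <= y)%R -> nu `]-oo, x]%classic <= nu `]-oo, y]%classic.
Proof. by move=> xy; rewrite le_measure ?inE//; apply: subitvPr; rewrite bnd_simp. Qed.

Let exists_cdf_ge {e : R} : (e < 1)%R -> exists y, e%:E <= nu `]-oo, y]%classic.
Proof.
move=> e1; apply: contrapT => /forallNP cdf_lt.
have : 1 <= e%:E.
  apply: (@cvge_to_le _ _ _ _ _ _ _ (cvg_prob_le_pinfty nu mid)); apply: nearW => n.
  by rewrite preimage_id; apply/ltW; rewrite ltNge; exact/negP/cdf_lt.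
by rewrite lee_fin leNgt e1.
Qed.

Let exists_cdf_lt {e : R} : (0 < e)%R -> exists y, nu `]-oo, y]%classic < e%:E.
Proof.
move=> e0; apply: contrapT => /forallNP cdf_ge.
have : e%:E <= 0.
  apply: (@cvge_to_ge _ _ _ _ _ _ _ (cvg_prob_le_ninfty nu mid)); apply: nearW => n.
  by rewrite preimage_id leNgt; exact/negP/cdf_ge.
by rewrite lee_fin leNgt e0.
Qed.

Lemma quantile_leP (e y : R) : (0 < e < 1)%R ->
  (quantile nu e <= y)%R <-> e%:E <= nu `]-oo, y]%classic.
Proof.
move=> /andP[e0 e1]; rewrite /quantile; set S := [set y | _].
have S0 : S !=set0 by have [z] := exists_cdf_ge e1; exists z.
have Slb : has_lbound S.
  have [z Fz] := exists_cdf_lt e0; exists z => w Sw; rewrite leNgt; apply/negP => wz.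
  by have := lt_le_trans Fz (le_trans Sw (cdf_le (ltW wz))); rewrite ltxx.
split=> [infSy|Sy]; last exact: ge_inf.
have := @cvge_to_ge _ _ _ _ _ e%:E _ (cvg_prob_le_right nu mid y).
rewrite preimage_id; apply; apply: nearW => n.
have [w Sw wS] : exists2 w, S w & (w < inf S + n.+1%:R^-1)%R.
  by apply: inf_lt S0 _; rewrite ltrDl invr_gt0 ltr0n.
rewrite preimage_id (le_trans Sw)// cdf_le//.
by move: infSy wS; set k := (n.+1%:R^-1)%R; lra.
Qed.

Lemma cdf_quantile_shift {c : R} {phi : R -> R} :
  (forall e, (0 < e < 1)%R -> quantile nu e = (c + phi e)%R) ->
  forall y, nu `]-oo, y]%classic = Ginv phi (y - c).
Proof.
move=> qE y; rewrite /Ginv.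
have -> : [set e | (0 < e < 1)%R /\ (phi e <= y - c)%R] =
          [set e | (0 < e < 1)%R /\ e%:E <= nu `]-oo, y]%classic].
  apply/seteqP; split=> e /= [e01 He]; split=> //.
    by apply/quantile_leP; rewrite // qE //; lra.
  by move/quantile_leP: He => /(_ e01); rewrite qE //; lra.
have : 0%:E <= nu `]-oo, y]%classic <= 1%:E by rewrite measure_ge0 probability_le1.
case: (nu _) => [p| |] /andP[] //; rewrite !lee_fin => p0 p1.
have [p_lt1|p_ge1] := ltP p 1%R.
- rewrite (_ : [set e | _] = `]0%R, p]%classic); last first.
    apply/seteqP; split=> e /=; rewrite in_itv/= lee_fin; first by case=> /andP[-> _].
    by move=> /andP[e0 ep]; split=> //; apply/andP; split=> //; lra.
  by rewrite lebesgue_measure_itv/= lte_fin; case: ltP => p0'; [rewrite sube0|congr _%:E; lra].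
- rewrite (_ : [set e | _] = `]0%R, 1%R[%classic); last first.
    apply/seteqP; split=> e /=; rewrite in_itv/= ?lee_fin; first by case.
    by move=> /andP[e0 e1]; split; [apply/andP|lra].
  by rewrite lebesgue_measure_itv/= lte_fin ltr01 sube0; congr _%:E; lra.
Qed.

End quantile.

Section integral_density.
Context {d} {T : measurableType d} {R : realType}.
Context {mu nu : {measure set T -> \bar R}} {D : set T} {g : T -> R}.
Hypotheses (mD : measurable D) (mg : measurable_fun D g)
  (g_ge0 : forall x, D x -> (0 <= g x)%R)
  (nuE : forall A, measurable A -> A `<=` D -> nu A = (\int[mu]_(x in A) (g x)%:E)%E).
Local Open Scope ereal_scope.
Import HBNNSimple.

Let G x := (g x)%:E.

Let G_ge0 E : E `<=` D -> forall x, E x -> 0 <= G x.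
Proof. by move=> ED x /ED Dx; rewrite lee_fin g_ge0. Qed.

Let mG E : measurable E -> E `<=` D -> measurable_fun E G.
Proof. by move=> mE ED; apply: measurable_funS mD ED _; exact/measurable_EFinP. Qed.

Let integral_indic_density E A : measurable E -> E `<=` D -> measurable A ->
  \int[mu]_(x in E) ((\1_A x)%:E * G x) = nu (A `&` E).
Proof.
move=> mE ED mA; rewrite nuE; last 2 first.
- exact: measurableI.
- by move=> x [_ /ED].
under eq_integral do rewrite muleC.
rewrite setIC integral_mkcondr; apply: eq_integral => x _.
by rewrite epatch_indic.
Qed.

Let integral_nnsfun_density E (h : {nnsfun T >-> R}) : measurable E -> E `<=` D ->
  \int[mu]_(x in E) ((h x)%:E * G x) = \int[nu]_(x in E) (h x)%:E.
Proof.
move=> mE ED.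
have hE x : (h x)%:E = \sum_(r \in range h) (r * \1_(h @^-1` [set r]) x)%:E.
  by rewrite fimfunE -fsumEFin.
have lvl_ge0 r x : 0 <= (r * \1_(h @^-1` [set r]) x)%:E.
  by rewrite EFinM nnfun_muleindic_ge0.
have mlvl r : measurable_fun E (fun x => (r * \1_(h @^-1` [set r]) x)%:E).
  by apply/measurable_EFinP; exact: measurable_funM.
under eq_integral do rewrite hE ge0_mule_fsuml//.
under [RHS]eq_integral do rewrite hE.
rewrite !ge0_integral_fsum//; last 2 first.
- by move=> r; apply: emeasurable_funM => //; exact: mG.
- by move=> r x Ex; apply: mule_ge0; [exact: lvl_ge0|exact: G_ge0 Ex].
apply: eq_fsbigr => r /[!inE] -[t _ ht].
rewrite integralZl_indic_nnsfun// integral_indic//.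
under eq_integral do rewrite EFinM -muleA.
rewrite ge0_integralZl//; first by rewrite integral_indic_density.
- apply: emeasurable_funM; last exact: mG.
  exact/measurable_EFinP/measurable_indic.
- by move=> x Ex; apply: mule_ge0; [rewrite lee_fin|exact: G_ge0 Ex].
- by rewrite -ht lee_fin.
Qed.

Lemma ge0_integral_density (f : T -> \bar R) E :
  (forall x, 0 <= f x) -> measurable E -> E `<=` D -> measurable_fun E f ->
  \int[mu]_(x in E) (f x * (g x)%:E) = \int[nu]_(x in E) f x.
Proof.
move=> f0 mE ED mf; pose h := nnsfun_approx mE mf.
have cvg_h x : E x -> (h n x)%:E @[n --> \oo] --> f x.
  by move=> Ex; exact: cvg_nnsfun_approx.
have nd_h x : {homo (fun n => (h n x)%:E) : m n / (m <= n)%N >-> m <= n}.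
  by move=> m n mn; rewrite lee_fin; exact/lefP/nd_nnsfun_approx.
transitivity (lim (\int[mu]_(x in E) ((h n x)%:E * G x) @[n --> \oo])).
  rewrite -monotone_convergence//; last 3 first.
  - move=> n; apply: emeasurable_funM; last exact: mG.
    exact/measurable_EFinP/measurable_funTS/measurable_funPT.
  - by move=> n x Ex; apply: mule_ge0; [rewrite lee_fin|exact: G_ge0 Ex].
  - by move=> x Ex m n mn; rewrite lee_wpmul2r ?nd_h//; exact: G_ge0 Ex.
  apply: eq_integral => x /[!inE] Ex; apply/esym/cvg_lim => //.
  by apply: cvgeZr => //; exact: cvg_h.
under eq_fun do rewrite integral_nnsfun_density//.
rewrite -monotone_convergence//; last 2 first.
- by move=> n; exact/measurable_EFinP/measurable_funTS/measurable_funPT.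
- by move=> n x Ex; rewrite lee_fin.
by apply: eq_integral => x /[!inE] Ex; apply/cvg_lim => //; exact: cvg_h.
Qed.

End integral_density.

Section measure_eq_halfline.
Context {R : realType}.
Local Notation RT := (measurableTypeR R).
Local Open Scope ereal_scope.

Lemma measure_eq_halfline (mu1 mu2 : {measure set RT -> \bar R}) (a : R) :
  (forall x, (x <= a)%R -> mu1 `]-oo, x]%classic = mu2 `]-oo, x]%classic) ->
  mu1 `]-oo, a]%classic < +oo ->
  forall A, measurable A -> A `<=` `]-oo, a]%classic -> mu1 A = mu2 A.
Proof.
move=> cdfE mu1a A mA Aa; have mIa : measurable (`]-oo, a]%classic : set RT) by [].
have mu1_fin x : (x <= a)%R -> mu1 `]-oo, x]%classic < +oo.
  by move=> xa; apply: le_lt_trans mu1a; rewrite le_measure ?inE//; exact: subset_itvl.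
rewrite -(setIidl Aa).
apply: (@measure_unique _ R RT (@ocitv R) (fun k : nat => `](- k%:R)%R, (k%:R : R)]%classic) erefl
  (@ocitvI R) (fun k => is_ocitv _ _) _ (mrestr mu1 mIa) (mrestr mu2 mIa)
  _ _ A mA).
- exact: bigcup_itvT.
- move=> _ [[b c] _ <-] /=; rewrite /mrestr.
  have -> : `]b, c]%classic `&` `]-oo, a]%classic =
            `]-oo, Num.min c a]%classic `\` `]-oo, b]%classic.
    apply/seteqP; split=> z /=; rewrite !in_itv/= le_min.
      by case=> /andP[bz ->] ->; split=> //; apply/negP; rewrite -ltNge.
    by case=> /andP[-> ->] /negP; rewrite -ltNge => ->.
  have : (Num.min c a <= a)%R by rewrite ge_min lexx orbT.
  move: (Num.min c a) => m ma.
  have IE : `]-oo, m]%classic `&` `]-oo, b]%classic = `]-oo, Num.min m b]%classic.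
    by apply/seteqP; split=> z /=; rewrite !in_itv/= le_min; [case=> -> ->|case/andP].
  have mba : (Num.min m b <= a)%R by rewrite ge_min ma.
  have mu1m := mu1_fin _ ma.
  have mu2m : mu2 `]-oo, m]%classic < +oo by rewrite -(cdfE _ ma).
  by rewrite !measureD// IE; congr (_ - _); exact: cdfE.
- move=> k /=; rewrite /mrestr; apply: le_lt_trans mu1a.
  by rewrite le_measure ?inE//; exact: measurableI.
Qed.

End measure_eq_halfline.

Section density_measure.
Context {R : realType}.
Local Notation RT := (measurableTypeR R).
Context {h : R -> R}.
Hypotheses (mh : measurable_fun [set: RT] h) (h_ge0 : forall x, (0 <= h x)%R).
Local Open Scope ereal_scope.

Let density_measure (A : set RT) := \int[lebesgue_measure]_(x in A) (h x)%:E.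

Let density_measure0 : density_measure set0 = 0.
Proof. exact: integral_set0. Qed.

Let density_measure_ge0 A : 0 <= density_measure A.
Proof. by apply: integral_ge0 => x _; rewrite lee_fin. Qed.

Let density_measure_sigma_additive : semi_sigma_additive density_measure.
Proof.
by apply: semi_sigma_additive_nng_induced => [|x]; [exact/measurable_EFinP|rewrite lee_fin].
Qed.

HB.instance Definition _ := isMeasure.Build _ RT R density_measure
  density_measure0 density_measure_ge0 density_measure_sigma_additive.

Lemma density_eq_halfline (mu : {measure set RT -> \bar R}) (a : R) :
  (forall x, (x <= a)%R ->
    mu `]-oo, x]%classic = \int[lebesgue_measure]_(t in `]-oo, x]) (h t)%:E) ->
  mu `]-oo, a]%classic < +oo ->
  forall A, measurable A -> A `<=` `]-oo, a]%classic ->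
    mu A = \int[lebesgue_measure]_(t in A) (h t)%:E.
Proof. exact: (@measure_eq_halfline _ mu density_measure). Qed.

End density_measure.

Lemma cond_distribution_density {R : realType} {d} {T : measurableType d}
    {P : probability T R} {X Y : T -> R} {D : set R} {kappa : R -> probability R R}
    {g : R -> R} :
  measurable_fun [set: T] X -> cond_distribution P X Y D kappa ->
  measurable D -> measurable_fun D g -> (forall x, D x -> (0 <= g x)%R) ->
  (forall A, measurable A -> A `<=` D ->
    P (X @^-1` A) = (\int[lebesgue_measure]_(x in A) (g x)%:E)%E) ->
  forall E B, measurable E -> E `<=` D -> measurable B ->
  P (X @^-1` E `&` Y @^-1` B) =
    (\int[lebesgue_measure]_(x in E) (kappa x B * (g x)%:E))%E.
Proof.
move=> mX [mkappa kappaE] mD mg g_ge0 gE E B mE ED mB.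
(* [kappaE] integrates against the law of [X] for the measurable structure of [R],
   [ge0_integral_density] against its law on [measurableTypeR R]; both integrals are
   integrals over [X @^-1` E] under [P]. *)
have mkE : measurable_fun E (fun x => kappa x B) by exact: measurable_funTS (mkappa _ mB).
rewrite kappaE// ge0_integral_pushforward//.
rewrite -(@ge0_integral_pushforward _ _ _ (measurableTypeR R) _ _ mX P E)//.
symmetry; apply: (@ge0_integral_density _ (measurableTypeR R) _ _ _ _ _ mD mg g_ge0) => //.
Qed.

Lemma cond_distributionS {R : realType} {d} {T : measurableType d}
    {P : probability T R} {X Y : T -> R} {D D' : set R} {kappa : R -> probability R R} :
  D' `<=` D -> cond_distribution P X Y D kappa -> cond_distribution P X Y D' kappa.
Proof. by move=> D'D [mk kE]; split=> // A B mA AD'; apply: kE => //; exact: subset_trans D'D. Qed.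

Lemma mixture_weight_integral1 {R : realType} {d} {T : measurableType d}
    {P : probability T R} {Z : T -> R} {k : R -> probability R R} {h : R -> R} :
  measurable_fun [set: T] Z ->
  (forall B, measurable B -> measurable_fun [set: R] (fun x => k x B)) ->
  measurable_fun [set: measurableTypeR R] h -> (forall x, (0 <= h x)%R) ->
  (forall y, (\int[lebesgue_measure]_(x in [set: R]) (k x `]-oo, y]%classic * (h x)%:E))%E
     = P (Z @^-1` `]-oo, y]%classic)) ->
  (\int[lebesgue_measure]_(x in [set: R]) (h x)%:E = 1)%E.
Proof.
move=> mZ mk mh h_ge0 mixE.
have k_cvg x : k x `]-oo, n%:R]%classic @[n --> \oo] --> 1%E.
  by have := cvg_prob_le_pinfty (k x) (@measurable_id _ _ setT).
transitivity (\int[lebesgue_measure]_(x in [set: R])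
                limn (fun n => k x `]-oo, n%:R]%classic * (h x)%:E))%E.
  apply: eq_integral => x _; apply/esym/cvg_lim => //.
  by rewrite -[X in _ --> X]mul1e; apply: cvgeZr => //; exact: k_cvg.
rewrite monotone_convergence//; last 3 first.
- by move=> n; apply: emeasurable_funM; [exact: mk|exact/measurable_EFinP].
- by move=> n x _; rewrite mule_ge0// lee_fin.
- move=> x _ m n mn; rewrite lee_wpmul2r ?lee_fin// le_measure ?inE//.
  by apply: subitvPr; rewrite bnd_simp ler_nat.
under eq_fun do rewrite mixE.
exact/cvg_lim/(cvg_prob_le_pinfty P mZ).
Qed.

Lemma joint_prob_setC_integral {R : realType} {d} {T : measurableType d}
    {P : probability T R} {X Y : T -> R} {D B : set R} {w : R -> \bar R} :
  measurable_fun [set: T] X -> measurable_fun [set: T] Y -> measurable D -> measurable B ->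
  measurable_fun [set: measurableTypeR R] w -> (forall x, (0 <= w x)%E) ->
  P (Y @^-1` B) = (\int[lebesgue_measure]_(x in [set: R]) w x)%E ->
  P (X @^-1` D `&` Y @^-1` B) = (\int[lebesgue_measure]_(x in D) w x)%E ->
  P (X @^-1` (~` D) `&` Y @^-1` B) = (\int[lebesgue_measure]_(x in ~` D) w x)%E.
Proof.
move=> mX mY mD mB mw w_ge0 PYE PDE.
have mXD : measurable (X @^-1` D) by rewrite -[X @^-1` D]setTI; exact: mX.
have mYB : measurable (Y @^-1` B) by rewrite -[Y @^-1` B]setTI; exact: mY.
have PYB : P (Y @^-1` B) =
    (P (X @^-1` (~` D) `&` Y @^-1` B) + P (X @^-1` D `&` Y @^-1` B))%E.
  by rewrite (measureDI _ mYB mXD) setDE -preimage_setC !(setIC (Y @^-1` B)).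
have intw : (\int[lebesgue_measure]_(x in [set: R]) w x =
    \int[lebesgue_measure]_(x in ~` D) w x + \int[lebesgue_measure]_(x in D) w x)%E.
  rewrite -(setvU D) ge0_integral_setU//; first exact: measurableC.
  - by rewrite setvU; exact: measurable_funTS.
  - by rewrite /disj_set setICl.
have finD : (\int[lebesgue_measure]_(x in D) w x)%E \is a fin_num.
  by rewrite -PDE fin_num_measure//; exact: measurableI.
by move: PYE; rewrite PYB intw PDE => /(fin_num_addIe finD).
Qed.

Lemma setC_gt0 {R : realType} : ~` [set x : R | (0 < x)%R] = `]-oo, 0%R]%classic.
Proof. by rewrite -set_itvoy setCitvr. Qed.

Lemma measurable_gt0 {R : realType} : measurable [set x : R | (0 < x)%R].
Proof. by rewrite -set_itvoy; exact: measurable_itv. Qed.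
#[local] Hint Resolve measurable_gt0 : core.

Lemma preimage_le0_nonneg {T : Type} {R : realDomainType} {X : T -> R} :
  (forall w, (0 <= X w)%R) -> X @^-1` `]-oo, 0%R]%classic = X @^-1` [set 0%R].
Proof.
move=> X_ge0; apply/seteqP; split=> w /=; rewrite in_itv/=; last by move=> ->.
by move=> Xw; apply/eqP; rewrite eq_le Xw X_ge0.
Qed.

Lemma law_density_le0 {R : realType} {d d'} {T : measurableType d} {T' : measurableType d'}
    {P : probability T R} {Q : probability T' R} {X : T -> R} {X' : T' -> R} {h : R -> R} :
  measurable_fun [set: T] X -> measurable_fun [set: T'] X' ->
  measurable_fun [set: measurableTypeR R] h -> (forall x, (0 <= h x)%R) ->
  (\int[lebesgue_measure]_(x in [set: R]) (h x)%:E = 1)%E ->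
  (forall A : set R, measurable A -> A `<=` [set x | (0 < x)%R] ->
    P (X @^-1` A) = (\int[lebesgue_measure]_(x in A) (h x)%:E)%E) ->
  (forall x, (x < 0)%R ->
    Q (X' @^-1` `]-oo, x]%classic) = (\int[lebesgue_measure]_(t in `]-oo, x]) (h t)%:E)%E) ->
  Q (X' @^-1` `]-oo, 0%R]%classic) = P (X @^-1` `]-oo, 0%R]%classic) ->
  forall A : set R, measurable A -> A `<=` `]-oo, 0%R]%classic ->
    Q (X' @^-1` A) = (\int[lebesgue_measure]_(x in A) (h x)%:E)%E.
Proof.
move=> mX mX' mh h_ge0 h1 hP hQ QP0.
have h_le0 : (\int[lebesgue_measure]_(x in `]-oo, 0%R]) (h x)%:E)%E =
             P (X @^-1` `]-oo, 0%R]%classic).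
  rewrite -setC_gt0 -(setIT (X @^-1` _)) -(preimage_setT X).
  symmetry; apply: (joint_prob_setC_integral mX mX measurable_gt0 measurableT).
  - exact/measurable_EFinP.
  - by move=> x; rewrite lee_fin.
  - by rewrite preimage_setT probability_setT h1.
  - by rewrite preimage_setT setIT hP.
apply: (density_eq_halfline mh h_ge0 (@pushforward _ _ _ (measurableTypeR R) _ Q X')).
- move=> x; rewrite le_eqVlt => /predU1P[->|x0]; last exact: hQ.
  by rewrite h_le0; exact: QP0.
- rewrite /pushforward (le_lt_trans (probability_le1 _ _)) ?ltry//.
  by rewrite -[X in measurable X]setTI; exact: mX'.
Qed.

Theorem propositionB7 (R : realType)
  (d : measure_display) (T : measurableType d) (P : probability T R)
  (X Y0 Y : T -> R)
  (mX : measurable_fun [set: T] X) (mY0 : measurable_fun [set: T] Y0)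
  (mY : measurable_fun [set: T] Y)
  (X_ge0 : forall w, 0 <= X w)
  (PX0_gt0 : (0 < P (X @^-1` [set 0%R]))%E)
  (fX : R -> R)
  (mfX : measurable_fun [set x : R | (0 < x)%R] fX)
  (fX_ge0 : forall x, 0 < x -> 0 <= fX x)
  (fX_density : forall A, measurable A -> A `<=` [set x : R | (0 < x)%R] ->
     P (X @^-1` A) = (\int[lebesgue_measure]_(x in A) (fX x)%:E)%E)
  (Y0_int : P.-integrable [set: T] (EFin \o Y0))
  (Y_obs : forall w, X w = 0 -> Y w = Y0 w)
  (kappa : R -> probability R R)
  (kappa_cond : cond_distribution P X Y0 [set x : R | (0 < x)%R] kappa)
  (s sstar phi h : R -> R)
  (A6i : forall x e, 0 < x -> 0 < e < 1 -> quantile (kappa x) e = s x + phi e)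
  (A6ii_s : real_analytic_on [set x : R | (0 < x)%R] s)
  (A6ii_sstar : real_analytic_on [set: R] sstar)
  (A6ii_ext : forall x, 0 < x -> sstar x = s x)
  (A6iii_phi : forall e1 e2, 0 < e1 -> e1 < e2 -> e2 < 1 -> phi e1 < phi e2)
  (h_cont : continuous h)
  (h_ge0 : forall x, 0 <= h x)
  (h_fX : forall x, 0 < x -> h x = fX x)
  (A6iii_mix : forall y,
     (\int[lebesgue_measure]_(x in [set: R]) (Ginv phi (y - sstar x) * (h x)%:E))%E
       = P (Y0 @^-1` [set z : R | (z <= y)%R]))
  (d' : measure_display) (T' : measurableType d') (Pstar : probability T' R)
  (Xs Ys0 : T' -> R)
  (mXs : measurable_fun [set: T'] Xs) (mYs0 : measurable_fun [set: T'] Ys0)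
  (Fstar_neg : forall x, x < 0 ->
     Pstar (Xs @^-1` [set z : R | (z <= x)%R]) = (\int[lebesgue_measure]_(t in [set z : R | (z <= x)%R]) (h t)%:E)%E)
  (Fstar_nonneg : forall x, 0 <= x ->
     Pstar (Xs @^-1` [set z : R | (z <= x)%R]) = P (X @^-1` [set z : R | (z <= x)%R]))
  (kappas : R -> probability R R)
  (kappas_cond : cond_distribution Pstar Xs Ys0 [set: R] kappas)
  (kappas_quant : forall x e, 0 < e < 1 -> quantile (kappas x) e = sstar x + phi e) :
  Pstar (Xs @^-1` [set z : R | (z <= 0)%R]) = P (X @^-1` [set 0]) /\
  forall y : R,
    condP Pstar (Ys0 @^-1` [set z : R | (z <= y)%R]) (Xs @^-1` [set z : R | (z <= 0)%R])
    = condP P (Y @^-1` [set z : R | (z <= y)%R]) (X @^-1` [set 0]).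
Proof.
have mh : measurable_fun [set: measurableTypeR R] h := continuous_measurable_fun h_cont.
have X_le0 := preimage_le0_nonneg X_ge0.
have PXs_le0 : Pstar (Xs @^-1` `]-oo, 0%R]%classic) = P (X @^-1` `]-oo, 0%R]%classic).
  by rewrite !set_itvNyc Fstar_nonneg.
split=> [|y]; first by rewrite -set_itvNyc PXs_le0 X_le0.
have cdf_kappas x z : kappas x `]-oo, z]%classic = Ginv phi (z - sstar x).
  exact: cdf_quantile_shift (kappas_quant x) z.
have mixE z : (\int[lebesgue_measure]_(x in [set: R])
    (kappas x `]-oo, z]%classic * (h x)%:E))%E = P (Y0 @^-1` `]-oo, z]%classic).
  by rewrite set_itvNyc -A6iii_mix; apply: eq_integral => x _; rewrite cdf_kappas.
have h_gt0 (A : set R) : measurable A -> A `<=` [set x | (0 < x)%R] ->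
    P (X @^-1` A) = (\int[lebesgue_measure]_(x in A) (h x)%:E)%E.
  move=> mA A0; rewrite fX_density//; apply: eq_integral => x /[!inE] /A0 x0.
  by rewrite h_fX.
have Xs_cdf_neg x : (x < 0)%R -> Pstar (Xs @^-1` `]-oo, x]%classic) =
    (\int[lebesgue_measure]_(t in `]-oo, x]) (h t)%:E)%E.
  by rewrite !set_itvNyc; exact: Fstar_neg.
have Xs_law := law_density_le0 mX mXs mh h_ge0
  (mixture_weight_integral1 mY0 (proj1 kappas_cond) mh h_ge0 mixE) h_gt0 Xs_cdf_neg PXs_le0.
have joint_X : P (X @^-1` [set x | (0 < x)%R] `&` Y0 @^-1` `]-oo, y]%classic) =
    (\int[lebesgue_measure]_(x in [set x | (0 < x)%R])
      (kappas x `]-oo, y]%classic * (h x)%:E))%E.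
  rewrite (cond_distribution_density mX kappa_cond measurable_gt0 mfX fX_ge0 fX_density)//.
  apply: eq_integral => x /[!inE] x0.
  by rewrite cdf_kappas h_fX// A6ii_ext// (cdf_quantile_shift (kappa x) (fun e => A6i x e x0)).
have joint_Xs : Pstar (Xs @^-1` `]-oo, 0%R]%classic `&` Ys0 @^-1` `]-oo, y]%classic) =
    (\int[lebesgue_measure]_(x in `]-oo, 0%R])
      (kappas x `]-oo, y]%classic * (h x)%:E))%E.
  by apply: (cond_distribution_density mXs (cond_distributionS (subsetT _) kappas_cond)
    _ (measurable_funTS mh) (fun x _ => h_ge0 x) Xs_law).
have joint_X0 : P (X @^-1` [set 0%R] `&` Y0 @^-1` `]-oo, y]%classic) =
    Pstar (Xs @^-1` `]-oo, 0%R]%classic `&` Ys0 @^-1` `]-oo, y]%classic).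
  rewrite -X_le0 joint_Xs -setC_gt0.
  apply: (joint_prob_setC_integral mX mY0 measurable_gt0 _ _ _ (esym (mixE y)) joint_X) => //.
  - by apply: emeasurable_funM; [exact: (proj1 kappas_cond)|exact/measurable_EFinP].
  - by move=> x; rewrite mule_ge0// lee_fin.
rewrite /condP -!set_itvNyc setIC -joint_X0 PXs_le0 X_le0; congr (fine (P _) / _).
by apply/seteqP; split=> w /= [Ew Fw]; split=> //; [rewrite Y_obs|rewrite -Y_obs].
Qed.
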